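(* Let $A, C, D$ be binary random variables, with $A$ taking values $a,\overline{a}$, $C$ taking values $c,\overline{c}$, $D$ taking values $d,\overline{d}$, and let $Y$ be a real random variable with finite expectation. Suppose the joint distribution factorizes as \[ p(A,C,D,Y)=p(C)\,p(D\mid C)\,p(A\mid C)\,p(Y\mid A,C). \] Assume that $C$ and $D$ are dependent, and that every event $\{A=x, C=y, D=z\}$ has positive probability. If $E[Y\mid A,D]$ is monotone in $D$, then $RD_{obs}$ lies between $RD_{true}$ and $RD_{crude}$ (i.e. $\min(RD_{true},RD_{crude})\le RD_{obs}\le \max(RD_{true},RD_{crude})$).
   Context: Define $RD_{true}=E[Y|a,c]p(c)+E[Y|a,\overline{c}]p(\overline{c})-E[Y|\overline{a},c]p(c)-E[Y|\overline{a},\overline{c}]p(\overline{c})$ (the average causal effect of $A$ on $Y$), $RD_{crude}=E[Y|a]-E[Y|\overline{a}]$, and $RD_{obs}=E[Y|a,d]p(d)+E[Y|a,\overline{d}]p(\overline{d})-E[Y|\overline{a},d]p(d)-E[Y|\overline{a},\overline{d}]p(\overline{d})$. $E[Y\mid A,D]$ is nondecreasing in $D$ if $E[Y\mid a,d]\ge E[Y\mid a,\overline{d}]$ and $E[Y\mid \overline{a},d]\ge E[Y\mid \overline{a},\overline{d}]$; nonincreasing if both inequalities are reversed; monotone if it is either. *)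

From HB Require Import structures.
From mathcomp Require Import all_boot all_order all_algebra.
From mathcomp Require Import all_classical all_reals all_analysis.
Set Implicit Arguments. Unset Strict Implicit. Unset Printing Implicit Defensive.
Import Order.TTheory GRing.Theory Num.Theory.
Local Open Scope classical_set_scope.
Local Open Scope ring_scope.

(* A binary random variable X on T is represented by the (measurable) event
   EX = {X = x}; {X = xbar} is its complement.  [ev b E] is the event
   {X = x} when b = true and {X = xbar} when b = false. *)
Definition ev {T : Type} (b : bool) (E : set T) : set T :=
  if b then E else ~` E.

Section Defs.
Context {R : realType} {d : measure_display} {T : measurableType d}.
Variable P : probability T R.

Definition pr (E : set T) : R := fine (P E).

Definition cpr (E F : set T) : R := pr (E `&` F) / pr F.

Definition cexp (Y : T -> R) (F : set T) : R :=
  fine (\int[P]_(w in F) (Y w)%:E) / pr F.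

Variables (EA EC ED : set T) (Y : T -> R).

Definition EYAC (x y : bool) : R := cexp Y (ev x EA `&` ev y EC).
Definition EYAD (x z : bool) : R := cexp Y (ev x EA `&` ev z ED).

Definition RD_true : R :=
  EYAC true true * pr EC + EYAC true false * pr (~` EC)
  - EYAC false true * pr EC - EYAC false false * pr (~` EC).

Definition RD_crude : R := cexp Y EA - cexp Y (~` EA).

Definition RD_obs : R :=
  EYAD true true * pr ED + EYAD true false * pr (~` ED)
  - EYAD false true * pr ED - EYAD false false * pr (~` ED).

Definition nondecreasing_in_D : Prop :=
  EYAD true true >= EYAD true false /\ EYAD false true >= EYAD false false.
Definition nonincreasing_in_D : Prop :=
  EYAD true true <= EYAD true false /\ EYAD false true <= EYAD false false.
Definition monotone_in_D : Prop := nondecreasing_in_D \/ nonincreasing_in_D.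

End Defs.

From HB Require Import structures.
From mathcomp Require Import all_boot all_order all_algebra.
From mathcomp Require Import all_classical all_reals all_analysis.
From mathcomp Require Import measurable_realfun ring lra.
Set Implicit Arguments. Unset Strict Implicit. Unset Printing Implicit Defensive.
Import Order.TTheory GRing.Theory Num.Theory.
Local Open Scope classical_set_scope.
Local Open Scope ring_scope.

(* Write u y z = P(C = y, D = z), a x y = P(A = x | C = y) and
   m x y = E[Y | A = x, C = y].  The factorization makes the law of Y on
   {A = x, C = y, D = z} a multiple of its law on {A = x, C = y}, so that
   E[Y | A = x, D = z] and E[Y | A = x] are weighted means of m x 1 and m x 0,
   with weights u y z * a x y and P(C = y) * a x y.  With l = a 1 1 - a 1 0 and
   d x = m x 1 - m x 0 this gives
     RD_obs - RD_true = l (d 1 S 1 + d 0 S 0),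
     RD_crude - RD_true = l (d 1 T 1 + d 0 T 0),
   where S x = h x (u _ 1) + h x (u _ 0), T x = h x (u _ 1 + u _ 0) and
   h x p = p 1 p 0 / (a x 1 p 1 + a x 0 p 0); h x is superadditive, so
   0 <= S x <= T x.  Finally E[Y | A = x, D = 1] - E[Y | A = x, D = 0] is d x
   times a factor with the sign of u 1 1 u 0 0 - u 1 0 u 0 1, which is nonzero
   because C and D are dependent.  Monotonicity thus forces d 1 and d 0 to have
   the same sign, and RD_obs lies between RD_true and RD_crude. *)

Section weighted_mean.
Variable R : realFieldType.
Implicit Types (w v m a p q : bool -> R).

Definition wmean w m := (w true * m true + w false * m false) / (w true + w false).

Lemma wmeanB w v m : w true + w false != 0 -> v true + v false != 0 ->
  wmean w m - wmean v m =
  (m true - m false) * (w true * v false - v true * w false)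
    / ((w true + w false) * (v true + v false)).
Proof. by move=> w0 v0; rewrite /wmean; field; rewrite w0 v0. Qed.

Definition harm a p := p true * p false / (a true * p true + a false * p false).

Lemma wmean_deviation a p m : a true * p true + a false * p false != 0 ->
  (p true + p false) * wmean (fun y => p y * a y) m
    - (p true * m true + p false * m false) =
  (a true - a false) * (m true - m false) * harm a p.
Proof. by move=> ap0; rewrite /wmean /harm; field. Qed.

Lemma harm_ge0 a p : (forall y, 0 < a y) -> (forall y, 0 < p y) -> 0 <= harm a p.
Proof.
move=> a_gt0 p_gt0; apply: divr_ge0; first by rewrite mulr_ge0 ?ltW.
by rewrite addr_ge0 // mulr_ge0 ?ltW.
Qed.

Lemma harm_superadditive a p q :
  (forall y, 0 < a y) -> (forall y, 0 < p y) -> (forall y, 0 < q y) ->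
  harm a p + harm a q <= harm a (fun y => p y + q y).
Proof.
move=> a_gt0 p_gt0 q_gt0.
move: (a_gt0 true) (a_gt0 false) (p_gt0 true) (p_gt0 false) (q_gt0 true) (q_gt0 false)
  => a1 a0 p1 p0 q1 q0.
rewrite -subr_ge0 /harm /=.
set Dp := a true * p true + a false * p false.
set Dq := a true * q true + a false * q false.
set Dpq := a true * (p true + q true) + a false * (p false + q false).
have [Dp_gt0 Dq_gt0 Dpq_gt0] : [/\ 0 < Dp, 0 < Dq & 0 < Dpq].
  by rewrite /Dp /Dq /Dpq; split; nra.
have -> : (p true + q true) * (p false + q false) / Dpq
    - (p true * p false / Dp + q true * q false / Dq)
  = a true * a false * (p true * q false - q true * p false) ^+ 2 / (Dp * Dq * Dpq).
  by rewrite /Dp /Dq /Dpq; field; rewrite !gt_eqF.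
apply: divr_ge0; last by rewrite !mulr_ge0 // ltW.
by rewrite mulr_ge0 ?sqr_ge0 // mulr_ge0 // ltW.
Qed.

End weighted_mean.

Section sign_bounds.
Variable R : realDomainType.

Lemma same_sign_of_scaled (d1 d0 g1 g0 : R) : 0 < g1 * g0 ->
  (0 <= d1 * g1 /\ 0 <= d0 * g0) \/ (d1 * g1 <= 0 /\ d0 * g0 <= 0) ->
  (0 <= d1 /\ 0 <= d0) \/ (d1 <= 0 /\ d0 <= 0).
Proof.
move=> g10.
have [g1_gt0|g1_lt0|g1_0] := ltrgt0P g1; last by rewrite g1_0 mul0r ltxx in g10.
- by case=> -[h1 h0]; [left|right]; split; nra.
- have g0_lt0 : g0 < 0 by rewrite -(nmulr_rgt0 _ g1_lt0).
  by case=> -[h1 h0]; [right|left]; split; nra.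
Qed.

Lemma same_sign_combination (d1 d0 s1 s0 t1 t0 : R) :
  (0 <= d1 /\ 0 <= d0) \/ (d1 <= 0 /\ d0 <= 0) ->
  0 <= s1 <= t1 -> 0 <= s0 <= t0 ->
  (0 <= d1 * s1 + d0 * s0 <= d1 * t1 + d0 * t0) \/
  (d1 * t1 + d0 * t0 <= d1 * s1 + d0 * s0 <= 0).
Proof.
move=> + /andP[s1_ge0 st1] /andP[s0_ge0 st0].
by case=> -[d1s d0s]; [left|right]; apply/andP; split; nra.
Qed.

Lemma shift_between (x l s t : R) :
  (0 <= s <= t) \/ (t <= s <= 0) ->
  Num.min x (x + l * t) <= x + l * s <= Num.max x (x + l * t).
Proof.
move=> st.
have : (0 <= l * s <= l * t) \/ (l * t <= l * s <= 0).
  have [l_ge0|l_lt0] := leP 0 l.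
    by case: st => /andP[h1 h2]; [left|right]; apply/andP; split; nra.
  by case: st => /andP[h1 h2]; [right|left]; apply/andP; split; nra.
by rewrite ge_min le_max; case=> /andP[h1 h2]; apply/andP; split; apply/orP; lra.
Qed.

End sign_bounds.

Section binary_model.
Variable R : realFieldType.
Variables (u a m : bool -> bool -> R).
Hypotheses (u_gt0 : forall y z, 0 < u y z)
  (u_sum1 : u true true + u true false + u false true + u false false = 1)
  (u_dep : u true true * u false false != u true false * u false true)
  (a_gt0 : forall x y, 0 < a x y) (a_sum1 : forall y, a true y + a false y = 1).

Definition marg_C y := u y true + u y false.
Definition marg_D z := u true z + u false z.
Definition mean_AD x z := wmean (fun y => u y z * a x y) (m x).
Definition mean_A x := wmean (fun y => marg_C y * a x y) (m x).

Definition rd_true := m true true * marg_C true + m true false * marg_C false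
  - m false true * marg_C true - m false false * marg_C false.
Definition rd_crude := mean_A true - mean_A false.
Definition rd_obs :=
  mean_AD true true * marg_D true + mean_AD true false * marg_D false
  - mean_AD false true * marg_D true - mean_AD false false * marg_D false.

Let m_gap x := m x true - m x false.
Let a_gap := a true true - a true false.
Let spread_D x := harm (a x) (u^~ true) + harm (a x) (u^~ false).
Let spread_C x := harm (a x) marg_C.

Let weight_neq0 x (p : bool -> R) :
  (forall y, 0 < p y) -> a x true * p true + a x false * p false != 0.
Proof. by move=> p_gt0; rewrite gt_eqF // addr_gt0 // mulr_gt0. Qed.

Let a_false y : a false y = 1 - a true y.
Proof. by have := a_sum1 y; lra. Qed.

Lemma rd_obsE :
  rd_obs = rd_true + a_gap * (m_gap true * spread_D true + m_gap false * spread_D false).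
Proof.
have dev x z := wmean_deviation (m x) (weight_neq0 x (fun y => u_gt0 y z)).
move: (dev true true) (dev true false) (dev false true) (dev false false).
rewrite /rd_obs /rd_true /marg_D /mean_AD /a_gap /m_gap /spread_D /marg_C !a_false.
lra.
Qed.

Lemma rd_crudeE :
  rd_crude = rd_true + a_gap * (m_gap true * spread_C true + m_gap false * spread_C false).
Proof.
have margC_gt0 y : 0 < marg_C y by rewrite addr_gt0.
have margC_sum1 : marg_C true + marg_C false = 1 by rewrite /marg_C -u_sum1; ring.
have dev x := wmean_deviation (m x) (weight_neq0 x margC_gt0).
move: (dev true) (dev false); rewrite margC_sum1 !mul1r.
rewrite /rd_crude /rd_true /mean_A /a_gap /m_gap /spread_C !a_false.
lra.
Qed.

Lemma spread_D_le_C x : 0 <= spread_D x <= spread_C x.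
Proof.
have ax_gt0 := a_gt0 x.
apply/andP; split; first by rewrite addr_ge0 // harm_ge0.
exact: harm_superadditive.
Qed.

Let det := u true true * u false false - u true false * u false true.

Lemma mean_AD_gap x :
  exists2 k, 0 < k & mean_AD x true - mean_AD x false = m_gap x * (k * det).
Proof.
pose den z := u true z * a x true + u false z * a x false.
have den_gt0 z : 0 < den z by rewrite addr_gt0 // mulr_gt0.
exists (a x true * a x false / (den true * den false)).
  by rewrite divr_gt0 // mulr_gt0.
rewrite /mean_AD wmeanB /= -/(den true) -/(den false) ?gt_eqF // /m_gap /det.
by field; rewrite !gt_eqF.
Qed.

Definition mean_AD_monotone :=
  (mean_AD true false <= mean_AD true true /\ mean_AD false false <= mean_AD false true) \/
  (mean_AD true true <= mean_AD true false /\ mean_AD false true <= mean_AD false false).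

Lemma m_gap_same_sign : mean_AD_monotone ->
  (0 <= m_gap true /\ 0 <= m_gap false) \/ (m_gap true <= 0 /\ m_gap false <= 0).
Proof.
move=> mono.
have [k1 k1_gt0 gap1] := mean_AD_gap true.
have [k0 k0_gt0 gap0] := mean_AD_gap false.
have det_neq0 : det != 0 by rewrite subr_eq0.
apply: (@same_sign_of_scaled _ _ _ (k1 * det) (k0 * det)).
  have -> : k1 * det * (k0 * det) = k1 * k0 * det ^+ 2 by ring.
  by apply: mulr_gt0; [exact: mulr_gt0 | rewrite exprn_even_gt0 // det_neq0 orbT].
by rewrite -gap1 -gap0 !subr_ge0 !subr_le0.
Qed.

Lemma rd_obs_between : mean_AD_monotone ->
  Num.min rd_true rd_crude <= rd_obs <= Num.max rd_true rd_crude.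
Proof.
move=> mono; rewrite rd_obsE rd_crudeE; apply: shift_between.
exact: same_sign_combination (m_gap_same_sign mono)
  (spread_D_le_C true) (spread_D_le_C false).
Qed.

End binary_model.

Lemma independent_of_det_eq0 (R : realFieldType) (u : bool -> bool -> R) :
  u true true + u true false + u false true + u false false = 1 ->
  u true true * u false false = u true false * u false true ->
  forall y z, u y z = marg_C u y * marg_D u z.
Proof. by rewrite /marg_C /marg_D => u_sum1 det0 [] []; nra. Qed.

Lemma integral_mscale d (T : measurableType d) (R : realType)
    (m : {measure set T -> \bar R}) (k : {nonneg R}) (D : set T) (f : T -> \bar R) :
  measurable D -> m.-integrable D f ->
  (\int[mscale k m]_(x in D) f x = k%:num%:E * \int[m]_(x in D) f x)%E.
Proof.
move=> mD intf; have mf := measurable_int _ intf.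
rewrite [LHS]integralE [in RHS]integralE.
rewrite (ge0_integral_mscale _ mD _ (measurable_funepos mf)) //.
rewrite (ge0_integral_mscale _ mD _ (measurable_funeneg mf)) //.
rewrite [RHS]muleBr //; apply: fin_num_adde_defl; rewrite fin_numN.
exact: integrable_neg_fin_num.
Qed.

Section set_integral.
Context d (T : measurableType d) (R : realType) (P : probability T R).
Variable Y : {RV P >-> R}.
Hypothesis iY : P.-integrable setT (EFin \o Y).

Section restriction.
Variables (S : set T) (mS : measurable S).

(* Away from 0 the law of Y * 1_S is the law of Y restricted to S, which turns
   integrals of Y over S into integrals against a measure on R. *)
Let YS : {mfun T >-> R} := (Y * indic_mfun S mS)%R.

Let YSE w : YS w = Y w * \1_S w. Proof. by []. Qed.

Let integrable_YS : P.-integrable setT (EFin \o YS).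
Proof.
apply: (le_integrable measurableT _ _ iY).
  by apply/measurable_EFinP; exact: measurable_funP.
move=> w _; rewrite -[(EFin \o YS) w]/((YS w)%:E) lee_fin YSE normrM indicE.
by case: (w \in S); rewrite ?normr1 ?normr0 ?mulr1 ?mulr0.
Qed.

Lemma preimage_mul_indic (A : set R) :
  A `<=` ~` [set 0] -> YS @^-1` A = S `&` Y @^-1` A.
Proof.
move=> A0; apply/seteqP; split => w.
- change (A (YS w) -> S w /\ A (Y w)); rewrite YSE indicE.
  case: (boolP (w \in S)) => [/set_mem Sw|_]; first by rewrite mulr1.
  by rewrite mulr0 => /A0 /(_ erefl).
- by case=> Sw Aw; change (A (YS w)); rewrite YSE indicE mem_set // mulr1.
Qed.

Lemma distribution_mul_indic (A : set R) : A `<=` ~` [set 0] ->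
  distribution P YS A = P (S `&` Y @^-1` A).
Proof. by move=> A0; rewrite /distribution /pushforward preimage_mul_indic. Qed.

Lemma integral_set_distribution :
  (\int[P]_(w in S) (Y w)%:E = \int[distribution P YS]_(y in ~` [set 0%R]) y%:E)%E.
Proof.
rewrite integral_mkcond.
transitivity (\int[P]_w (EFin \o YS) w)%E.
  apply: eq_integral => w _; rewrite patchE -[(EFin \o YS) w]/((YS w)%:E) YSE indicE.
  by case: (w \in S); rewrite ?mulr1 ?mulr0.
rewrite -integral_distribution // [RHS]integral_mkcond.
apply: eq_integral => y _; rewrite patchE.
by case: ifPn => // /negP; rewrite inE /= => /contra_notP ->.
Qed.

Lemma integrable_set_distribution :
  (distribution P YS).-integrable (~` [set 0%R]) EFin.
Proof.
apply: (integrableS measurableT) => //; first exact: measurableC.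
apply/integrableP; split; first by apply/measurable_EFinP.
rewrite ge0_integral_distribution //; first by case/integrableP: integrable_YS.
by apply: measurableT_comp => //; apply/measurable_EFinP.
Qed.

End restriction.

Lemma integral_set_proportional (S1 S2 : set T) (k : R) :
  measurable S1 -> measurable S2 -> 0 <= k ->
  (forall B, measurable B -> pr P (S1 `&` Y @^-1` B) = k * pr P (S2 `&` Y @^-1` B)) ->
  (\int[P]_(w in S1) (Y w)%:E = k%:E * \int[P]_(w in S2) (Y w)%:E)%E.
Proof.
move=> mS1 mS2 k0 prop.
rewrite (integral_set_distribution mS1) (integral_set_distribution mS2).
rewrite -[k]/((NngNum k0)%:num) -integral_mscale; last 2 first.
- exact: measurableC.
- exact: integrable_set_distribution.
apply: eq_measure_integral => A mA A0.
change (distribution P (Y * indic_mfun S1 mS1)%R A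
  = k%:E * distribution P (Y * indic_mfun S2 mS2)%R A)%E.
rewrite !distribution_mul_indic //.
have mYA : measurable (Y @^-1` A) by rewrite -[_ @^-1` _]setTI; exact: measurable_funP.
have prE E : measurable E -> P (E `&` Y @^-1` A) = (pr P (E `&` Y @^-1` A))%:E.
  by move=> mE; rewrite /pr fineK // fin_num_measure //; exact: measurableI.
by rewrite !prE // prop.
Qed.

End set_integral.

Section splitting.
Context d (T : measurableType d) (R : realType) (P : probability T R).

Lemma measurable_ev b (E : set T) : measurable E -> measurable (ev b E).
Proof. by case: b => //= mE; exact: measurableC. Qed.

Lemma pr_split_ev (F E : set T) : measurable F -> measurable E ->
  pr P F = pr P (F `&` ev true E) + pr P (F `&` ev false E).
Proof.
move=> mF mE; have mFE b : measurable (F `&` ev b E).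
  by apply: measurableI => //; exact: measurable_ev.
rewrite /pr -fineD ?fin_num_measure // -measureU //.
- by rewrite -setIUr setUv setIT.
- by rewrite setIACA setICr !setI0.
Qed.

Definition expect_on (Y : T -> R) (F : set T) := fine (\int[P]_(w in F) (Y w)%:E)%E.

Lemma expect_on_split_ev (Y : T -> R) (F E : set T) :
  P.-integrable setT (EFin \o Y) -> measurable F -> measurable E ->
  expect_on Y F = expect_on Y (F `&` ev true E) + expect_on Y (F `&` ev false E).
Proof.
move=> iY mF mE; have mFE b : measurable (F `&` ev b E).
  by apply: measurableI => //; exact: measurable_ev.
have iFE b := integrableS measurableT (mFE b) (subsetT _) iY.
rewrite /expect_on -fineD ?integrable_fin_num //.
rewrite -integral_setU //=.
- by rewrite -setIUr setUv setIT.
- exact: mFE true.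
- exact: mFE false.
- by rewrite -setIUr setUv setIT; apply: measurable_funTS; exact: measurable_int iY.
- by rewrite /disj_set setIACA setICr !setI0.
Qed.

End splitting.

Section factorized_model.
Context d (T : measurableType d) (R : realType) (P : probability T R).
Variables (EA EC ED : set T) (Y : {RV P >-> R}).
Hypotheses (mA : measurable EA) (mC : measurable EC) (mD : measurable ED).
Hypothesis iY : P.-integrable setT (EFin \o Y).
Hypothesis fact : forall (x y z : bool) (B : set R), measurable B ->
  pr P (ev x EA `&` ev y EC `&` ev z ED `&` (Y @^-1` B)) =
  pr P (ev y EC) * cpr P (ev z ED) (ev y EC) * cpr P (ev x EA) (ev y EC)
    * cpr P (Y @^-1` B) (ev x EA `&` ev y EC).
Hypothesis pos : forall x y z, 0 < pr P (ev x EA `&` ev y EC `&` ev z ED).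

Definition pCD y z := pr P (ev y EC `&` ev z ED).
Definition pA_C x y := cpr P (ev x EA) (ev y EC).

Let mA_ x : measurable (ev x EA) := measurable_ev x mA.
Let mC_ y : measurable (ev y EC) := measurable_ev y mC.
Let mD_ z : measurable (ev z ED) := measurable_ev z mD.
Let mAC x y : measurable (ev x EA `&` ev y EC) := measurableI _ _ (mA_ x) (mC_ y).
Let mACD x y z : measurable (ev x EA `&` ev y EC `&` ev z ED) :=
  measurableI _ _ (mAC x y) (mD_ z).

Lemma pr_AC_gt0 x y : 0 < pr P (ev x EA `&` ev y EC).
Proof. by rewrite (pr_split_ev P (mAC x y) mD) addr_gt0. Qed.

Lemma pr_C_split y :
  pr P (ev y EC) = pr P (ev true EA `&` ev y EC) + pr P (ev false EA `&` ev y EC).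
Proof. by rewrite (pr_split_ev P (mC_ y) mA) !(setIC (ev y EC)). Qed.

Lemma pr_C_gt0 y : 0 < pr P (ev y EC).
Proof. by rewrite pr_C_split addr_gt0 // pr_AC_gt0. Qed.

Lemma pr_C y : pr P (ev y EC) = marg_C pCD y.
Proof. exact: pr_split_ev. Qed.

Lemma pr_D z : pr P (ev z ED) = marg_D pCD z.
Proof. by rewrite (pr_split_ev P (mD_ z) mC) /marg_D /pCD !(setIC (ev z ED)). Qed.

Lemma pCD_sum1 : pCD true true + pCD true false + pCD false true + pCD false false = 1.
Proof.
have := pr_split_ev P measurableT mC; rewrite /pr probability_setT !setTI -!/(pr P _).
by rewrite !pr_C /marg_C addrA.
Qed.

Lemma pA_C_gt0 x y : 0 < pA_C x y.
Proof. by rewrite divr_gt0 ?pr_AC_gt0 ?pr_C_gt0. Qed.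

Lemma pA_C_sum1 y : pA_C true y + pA_C false y = 1.
Proof.
by rewrite /pA_C /cpr -mulrDl -pr_C_split divff // gt_eqF // pr_C_gt0.
Qed.

Lemma pCD_gt0 y z : 0 < pCD y z.
Proof.
rewrite /pCD (pr_split_ev P (measurableI _ _ (mC_ y) (mD_ z)) mA).
by rewrite !(setIC (_ `&` _)) !setIA addr_gt0.
Qed.

Lemma pr_AC x y : pr P (ev x EA `&` ev y EC) = marg_C pCD y * pA_C x y.
Proof. by rewrite /pA_C /cpr -pr_C mulrC divfK // gt_eqF // pr_C_gt0. Qed.

Lemma pr_ACD x y z : pr P (ev x EA `&` ev y EC `&` ev z ED) = pCD y z * pA_C x y.
Proof.
have := fact x y z measurableT; rewrite preimage_setT setIT => ->.
rewrite -/(pA_C x y) /cpr setTI (setIC (ev z ED)) -/(pCD y z).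
have := pr_C_gt0 y; have := pr_AC_gt0 x y => pAC pC.
by field; rewrite !gt_eqF.
Qed.

Lemma expect_on_AC x y :
  expect_on P Y (ev x EA `&` ev y EC) = pr P (ev x EA `&` ev y EC) * EYAC P EA EC Y x y.
Proof. by rewrite /EYAC /cexp mulrC divfK // gt_eqF // pr_AC_gt0. Qed.

Lemma expect_on_ACD x y z : expect_on P Y (ev x EA `&` ev y EC `&` ev z ED) =
  pCD y z * pA_C x y * EYAC P EA EC Y x y.
Proof.
have pC := pr_C_gt0 y; have pAC := pr_AC_gt0 x y.
(* by the factorization, the law of Y on {A = x, C = y, D = z} is
   P(D = z | C = y) times its law on {A = x, C = y} *)
have k_ge0 : 0 <= pCD y z / pr P (ev y EC) by rewrite divr_ge0 ?ltW ?pCD_gt0.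
rewrite /expect_on (integral_set_proportional iY (mACD x y z) (mAC x y) k_ge0).
  rewrite fineM //; last first.
    exact: integrable_fin_num (integrableS measurableT (mAC x y) (subsetT _) iY).
  rewrite -/(expect_on P Y _) expect_on_AC /pA_C /cpr /=.
  by field; rewrite gt_eqF.
move=> B mB; rewrite fact // /cpr (setIC (ev z ED)) (setIC (Y @^-1` B)) -/(pCD y z).
by field; rewrite !gt_eqF.
Qed.

Lemma EYAD_mean x z : EYAD P EA ED Y x z = mean_AD pCD pA_C (EYAC P EA EC Y) x z.
Proof.
have mAD := measurableI _ _ (mA_ x) (mD_ z).
rewrite /EYAD /cexp -/(expect_on P Y _).
rewrite (expect_on_split_ev iY mAD mC) (pr_split_ev P mAD mC).
by rewrite !(setIAC _ (ev z ED)) !expect_on_ACD !pr_ACD.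
Qed.

Lemma cexp_mean_A x : cexp P Y (ev x EA) = mean_A pCD pA_C (EYAC P EA EC Y) x.
Proof.
rewrite /cexp -/(expect_on P Y _).
rewrite (expect_on_split_ev iY (mA_ x) mC) (pr_split_ev P (mA_ x) mC).
by rewrite !expect_on_AC !pr_AC.
Qed.

Lemma RD_model :
  [/\ RD_true P EA EC Y = rd_true pCD (EYAC P EA EC Y),
      RD_crude P EA Y = rd_crude pCD pA_C (EYAC P EA EC Y) &
      RD_obs P EA ED Y = rd_obs pCD pA_C (EYAC P EA EC Y)].
Proof.
split; first by rewrite /RD_true (pr_C true) (pr_C false).
  by rewrite /RD_crude (cexp_mean_A true) (cexp_mean_A false).
by rewrite /RD_obs (pr_D true) (pr_D false) !EYAD_mean.
Qed.

End factorized_model.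

Theorem corollary1 (R : realType) (d : measure_display) (T : measurableType d)
  (P : probability T R) (EA EC ED : set T) (Y : {RV P >-> R})
  (mA : measurable EA) (mC : measurable EC) (mD : measurable ED)
  (iY : P.-integrable setT (EFin \o Y))
  (* factorization p(A,C,D,Y) = p(C) p(D|C) p(A|C) p(Y|A,C) *)
  (fact : forall (x y z : bool) (B : set R), measurable B ->
     pr P (ev x EA `&` ev y EC `&` ev z ED `&` (Y @^-1` B)) =
     pr P (ev y EC) * cpr P (ev z ED) (ev y EC) * cpr P (ev x EA) (ev y EC)
       * cpr P (Y @^-1` B) (ev x EA `&` ev y EC))
  (* C and D are dependent *)
  (dep : ~ (forall y z : bool,
        pr P (ev y EC `&` ev z ED) = pr P (ev y EC) * pr P (ev z ED)))
  (pos : forall x y z : bool, 0 < pr P (ev x EA `&` ev y EC `&` ev z ED))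
  (mono : monotone_in_D P EA ED Y) :
  Num.min (RD_true P EA EC Y) (RD_crude P EA Y) <= RD_obs P EA ED Y <=
  Num.max (RD_true P EA EC Y) (RD_crude P EA Y).
Proof.
have [-> -> ->] := RD_model mA mC mD iY fact pos.
apply: rd_obs_between.
- exact: pCD_gt0 mA mC mD pos.
- exact: pCD_sum1 mC mD.
- apply/eqP => det0; apply: dep => y z.
  rewrite (pr_C P mC mD) (pr_D P mC mD).
  exact: independent_of_det_eq0 (pCD_sum1 P mC mD) det0 y z.
- exact: pA_C_gt0 mA mC mD pos.
- exact: pA_C_sum1 mA mC mD pos.
- by rewrite /mean_AD_monotone -!(EYAD_mean mA mC mD iY fact pos).
Qed.
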